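(* Let $r\ge1$ be an integer, let $\Gamma$ be a finite graph without loops (edges oriented if $r$ is odd), and let $e$ be an edge of $\Gamma$ such that there is a different edge $e'$ of $\Gamma$ with the same two endpoints as $e$. Then the rings $R^r(\Gamma)$ and $R^r(\Gamma\setminus e)$ are isomorphic.
   Context: A circuit $w$ of length $k$ in a graph is an ordered sequence of edges $w_1,\dots,w_k$ with vertices $v_1,\dots,v_k,v_{k+1}=v_1$ such that $v_i,v_{i+1}$ are the endpoints of $w_i$; for $r$ odd, $\epsilon_i(w)=1$ if $w_i$ is oriented from $v_i$ to $v_{i+1}$ and $-1$ otherwise. $\Lambda^r(\Gamma)$: for $r$ even, the free graded-commutative $\mathbb{Z}$-algebra on generators $e_\beta$ of degree $r-1$, one per edge; for $r$ odd, the commutative graded $\mathbb{Z}$-algebra on such generators modulo $e_\beta^2=0$. Arnold class: $A(w)=\sum_i(-1)^i w_1\cdots\widehat{w_i}\cdots w_k$ ($r$ even), $A(w)=\sum_i\epsilon_i(w) w_1\cdots\widehat{w_i}\cdots w_k$ ($r$ odd), where $w_i$ stands for $e_{w_i}$; $A(w)=1$ for a one-edge circuit (loop). $R^r(\Gamma)=\Lambda^r(\Gamma)/I^r(\Gamma)$ where $I^r(\Gamma)$ is the ideal generated by all Arnold classes. $\Gamma\setminus e$ is $\Gamma$ with the edge $e$ deleted. *)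

From HB Require Import structures.
From mathcomp Require Import all_boot all_order all_algebra.
Set Implicit Arguments. Unset Strict Implicit. Unset Printing Implicit Defensive.
Import Order.TTheory GRing.Theory Num.Theory.
Local Open Scope ring_scope.

(* A finite graph without loops is given by finite types of vertices V and
   edges E and a map [ends : E -> V * V]; edge b goes from (ends b).1 to
   (ends b).2 (the orientation is only used when r is odd). *)

Section Algebra.
Variables (V E : finType) (ends : E -> V * V) (r : nat).

(* Lambda^r(Gamma): the free Z-module with basis e_S, S a set of edges, where
   e_S is the product of the generators of S taken in increasing order
   (w.r.t. the fixed order enum_rank on E).  For r even (odd-degree
   generators) this is the exterior algebra; for r odd it is the commutative
   algebra with e_b^2 = 0. *)
Local Notation Lam := {ffun {set E} -> int}.

(* sign of e_S * e_T = sgnST * e_(S u T) for disjoint S, T *)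
Definition sgnST (S T : {set E}) : int :=
  if odd r then 1
  else (-1) ^+ #|[set p : E * E | (p.1 \in S) && (p.2 \in T)
                                  && (enum_rank p.2 < enum_rank p.1)%N]|.

Definition lmul (a b : Lam) : Lam :=
  [ffun U => \sum_(S : {set E}) \sum_(T : {set E})
     if (S :&: T == set0) && (S :|: T == U) then sgnST S T * a S * b T else 0].

Definition lone : Lam := [ffun S => ((S == set0) : nat)%:Z].
Definition gen (b : E) : Lam := [ffun S => ((S == [set b]) : nat)%:Z].

Definition prodl (l : seq E) : Lam := foldr lmul lone (map gen l).

(* A circuit of length k is encoded as a sequence of triples (w_i, (v_i, v_{i+1}))
   with v_{k+1} = v_1, and {v_i, v_{i+1}} the endpoints of w_i. *)
Definition circuit (c : seq (E * (V * V))) : bool :=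
  [&& (0 < size c)%N,
      map (fun t => t.2.2) c == rot 1 (map (fun t => t.2.1) c)
    & all (fun t => (ends t.1 == t.2) || (ends t.1 == (t.2.2, t.2.1))) c].

Definition eps (c : seq (E * (V * V))) (i : nat) : int :=
  if onth c i is Some t then (if ends t.1 == t.2 then 1 else -1) else 0.

(* Arnold class; index i is 0-based here, so (-1)^i becomes (-1)^(i+1) *)
Definition arnold (c : seq (E * (V * V))) : Lam :=
  \sum_(i < size c)
     [ffun S => (if odd r then eps c i else (-1) ^+ i.+1) *
                 prodl (map fst (take i c ++ drop i.+1 c)) S].

Definition inI (z : Lam) : Prop :=
  exists s : seq (Lam * seq (E * (V * V)) * Lam),
    all (fun t => circuit t.1.2) s /\
    z = \sum_(t <- s) lmul (lmul t.1.1 (arnold t.1.2)) t.2.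

End Algebra.

Notation Lam E := {ffun {set E} -> int}.

(* The ring isomorphism R^r(Gamma1) = Lam1/I1  ~=  R^r(Gamma2) = Lam2/I2,
   expressed through set-theoretic lifts f, g of mutually inverse maps
   between the quotients, which are well defined and ring morphisms. *)
Definition quot_ring_hom (V E1 E2 : finType) (en1 : E1 -> V * V)
    (en2 : E2 -> V * V) (r : nat) (f : Lam E1 -> Lam E2) : Prop :=
  [/\ forall x y, inI en1 r (x - y) -> inI en2 r (f x - f y),
      forall x y, inI en2 r (f (x + y) - (f x + f y)),
      forall x y, inI en2 r (f (lmul r x y) - lmul r (f x) (f y))
    & inI en2 r (f (lone E1) - lone E2)].

Definition R_iso (V E1 E2 : finType) (en1 : E1 -> V * V)
    (en2 : E2 -> V * V) (r : nat) : Prop :=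
  exists (f : Lam E1 -> Lam E2) (g : Lam E2 -> Lam E1),
    [/\ quot_ring_hom en1 en2 r f, quot_ring_hom en2 en1 r g,
        forall x, inI en1 r (g (f x) - x)
      & forall y, inI en2 r (f (g y) - y)].

Definition del_ends (V E : finType) (ends : E -> V * V) (e : E) :
  {b : E | b != e} -> V * V := fun b => ends (val b).
Arguments del_ends {V E} ends e.

From HB Require Import structures.
From mathcomp Require Import all_boot all_order all_algebra.
From mathcomp Require Import ring.
Set Implicit Arguments. Unset Strict Implicit. Unset Printing Implicit Defensive.
Import GRing.Theory.
Local Open Scope ring_scope.

(* Let e' be parallel to e, and let sigma = +-1 be such that
   sigma e_e' - e_e is, up to sign, the Arnold class of the 2-circuit (e, e').
   Substituting sigma e_e' for e_e defines an algebra map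
   collapse : Lambda(Gamma) -> Lambda(Gamma \ e); it sends the Arnold class of
   a circuit to +- the Arnold class of the circuit rerouted through e'.  The
   inclusion embed : Lambda(Gamma \ e) -> Lambda(Gamma) sends circuits to
   circuits.  Now collapse o embed = id, while embed (collapse x) - x is a sum
   of multiples of sigma e_e' - e_e, hence lies in I(Gamma).  All maps are
   built as linear extensions of their values on the monomial basis e_S, and
   they are multiplicative as soon as they are so on basis elements. *)

Section LambdaAlgebra.
Variables (E : finType) (r : nat).
Implicit Types (x y z : Lam E) (S T U : {set E}).

Definition basis S : Lam E := [ffun T => ((T == S) : nat)%:Z].

Lemma basis_lone : lone E = basis set0. Proof. by []. Qed.
Lemma basis_gen b : gen b = basis [set b]. Proof. by []. Qed.

Lemma Lam_expand x : x = \sum_S basis S *~ x S.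
Proof.
apply/ffunP=> U; rewrite sum_ffunE (bigD1 U) //= big1 => [|S nS].
  by rewrite ffunMzE !ffunE eqxx mulrzz mul1r addr0.
by rewrite ffunMzE !ffunE eq_sym (negbTE nS) mul0rz.
Qed.

Lemma lmulDl x y z : lmul r (x + y) z = lmul r x z + lmul r y z.
Proof.
apply/ffunP=> U; rewrite !ffunE -big_split; apply: eq_bigr => S _.
rewrite -big_split; apply: eq_bigr => T _; case: ifP; rewrite ?addr0 // => _.
by rewrite ffunE mulrDr mulrDl.
Qed.

Lemma lmulDr x y z : lmul r x (y + z) = lmul r x y + lmul r x z.
Proof.
apply/ffunP=> U; rewrite !ffunE -big_split; apply: eq_bigr => S _.
rewrite -big_split; apply: eq_bigr => T _; case: ifP; rewrite ?addr0 // => _.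
by rewrite ffunE mulrDr.
Qed.

Lemma lmulMzl x y k : lmul r (x *~ k) y = lmul r x y *~ k.
Proof.
apply/ffunP=> U; rewrite ffunMzE !ffunE mulrz_suml; apply: eq_bigr => S _.
rewrite mulrz_suml; apply: eq_bigr => T _; case: ifP; rewrite ?mul0rz // => _.
by rewrite ffunMzE !mulrzz; ring.
Qed.

Lemma lmulMzr x y k : lmul r x (y *~ k) = lmul r x y *~ k.
Proof.
apply/ffunP=> U; rewrite ffunMzE !ffunE mulrz_suml; apply: eq_bigr => S _.
rewrite mulrz_suml; apply: eq_bigr => T _; case: ifP; rewrite ?mul0rz // => _.
by rewrite ffunMzE !mulrzz; ring.
Qed.

Lemma lmul0l y : lmul r 0 y = 0.
Proof. by rewrite -(mulr0z 0) lmulMzl mulr0z. Qed.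
Lemma lmul0r x : lmul r x 0 = 0.
Proof. by rewrite -(mulr0z 0) lmulMzr mulr0z. Qed.
Lemma lmulBl x y z : lmul r (x - y) z = lmul r x z - lmul r y z.
Proof. by rewrite lmulDl -mulrN1z lmulMzl mulrN1z. Qed.
Lemma lmulBr x y z : lmul r x (y - z) = lmul r x y - lmul r x z.
Proof. by rewrite lmulDr -mulrN1z lmulMzr mulrN1z. Qed.

Lemma lmul_suml (I : Type) (s : seq I) (P : pred I) (F : I -> Lam E) y :
  lmul r (\sum_(i <- s | P i) F i) y = \sum_(i <- s | P i) lmul r (F i) y.
Proof. exact: (big_morph (lmul r ^~ y) (fun a b => lmulDl a b y) (lmul0l y)). Qed.

Lemma lmul_sumr (I : Type) (s : seq I) (P : pred I) (F : I -> Lam E) x :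
  lmul r x (\sum_(i <- s | P i) F i) = \sum_(i <- s | P i) lmul r x (F i).
Proof. exact: (big_morph (lmul r x) (lmulDr x) (lmul0r x)). Qed.

Lemma lmul_basis S T : lmul r (basis S) (basis T) =
  if S :&: T == set0 then basis (S :|: T) *~ sgnST r S T else 0.
Proof.
apply/ffunP=> U; rewrite ffunE (bigD1 S) //= [X in _ + X]big1 => [|S' nS]; last first.
  by apply: big1 => T' _; case: ifP => // _; rewrite ffunE (negbTE nS) mulr0 mul0r.
rewrite addr0 (bigD1 T) //= [X in _ + X]big1 => [|T' nT]; last first.
  by case: ifP => // _; rewrite [basis T T']ffunE (negbTE nT) mulr0.
rewrite !ffunE !eqxx !mulr1 !addr0; case: (S :&: T == set0); rewrite /= ?ffunE //.
by rewrite ffunMzE ffunE eq_sym mulrzz; case: (U == _); rewrite ?mul1r ?mul0r.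
Qed.

Lemma prodl_cons (b : E) l : prodl r (b :: l) = lmul r (gen b) (prodl r l).
Proof. by []. Qed.

End LambdaAlgebra.

Section Signs.
Variables (E : finType) (r : nat).
Implicit Types (S T A B C X : {set E}).

Definition inversions S T : nat :=
  \sum_(a in S) \sum_(b in T) (enum_rank b < enum_rank a)%N.

Lemma sgnSTE S T : sgnST r S T = if odd r then 1 else (-1) ^+ inversions S T.
Proof.
rewrite /sgnST; case: ifP => // _; congr (_ ^+ _).
rewrite -sum1dep_card /inversions pair_big /= big_mkcondr /=.
by apply: eq_bigr => p _; case: ltnP.
Qed.

Lemma sum_setU_disjoint (F : E -> nat) A B : A :&: B == set0 ->
  (\sum_(a in A :|: B) F a = \sum_(a in A) F a + \sum_(a in B) F a)%N.
Proof.
by rewrite setI_eq0 => AB; rewrite -bigU //; apply: eq_bigl => a; rewrite !inE.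
Qed.

Lemma inversionsUl A B C : A :&: B == set0 ->
  inversions (A :|: B) C = (inversions A C + inversions B C)%N.
Proof. exact: sum_setU_disjoint. Qed.

Lemma inversionsUr A B C : B :&: C == set0 ->
  inversions A (B :|: C) = (inversions A B + inversions A C)%N.
Proof.
by move=> BC; rewrite /inversions -big_split; apply: eq_bigr => a _; apply: sum_setU_disjoint.
Qed.

Lemma inversions_set1C a X : a \notin X ->
  (inversions X [set a] + inversions [set a] X)%N = #|X|.
Proof.
move=> aX; rewrite /inversions big_set1.
under eq_bigr => x _ do rewrite big_set1.
rewrite -big_split /= -[RHS]sum1_card; apply: eq_bigr => x xX /=.
case: ltngtP => //= /val_inj/enum_rank_inj eq_xa.
by rewrite eq_xa xX in aX.
Qed.

Lemma sgnSTUl A B C : A :&: B == set0 ->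
  sgnST r (A :|: B) C = sgnST r A C * sgnST r B C.
Proof. by move=> AB; rewrite !sgnSTE inversionsUl //; case: ifP; rewrite ?mulr1 ?exprD. Qed.

Lemma sgnSTUr A B C : B :&: C == set0 ->
  sgnST r A (B :|: C) = sgnST r A B * sgnST r A C.
Proof. by move=> BC; rewrite !sgnSTE inversionsUr //; case: ifP; rewrite ?mulr1 ?exprD. Qed.

Lemma sgnST_sq S T : sgnST r S T * sgnST r S T = 1.
Proof. by rewrite sgnSTE; case: ifP; rewrite ?mulr1 // -expr2 sqrr_sign. Qed.

Lemma sgnST_set1C a X : a \notin X ->
  sgnST r X [set a] * sgnST r [set a] X = if odd r then 1 else (-1) ^+ #|X|.
Proof.
by move=> aX; rewrite !sgnSTE -(inversions_set1C aX); case: ifP; rewrite ?mulr1 ?exprD.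
Qed.

Lemma sgnST_set1_transfer a b X : a \notin X -> b \notin X ->
  sgnST r [set b] X = sgnST r X [set a] * sgnST r [set a] X * sgnST r X [set b].
Proof.
move=> aX bX; rewrite sgnST_set1C // -(sgnST_set1C bX) mulrC mulrA.
by rewrite sgnST_sq mul1r.
Qed.

Lemma sgnST_inversions0 S T : inversions S T = 0%N -> sgnST r S T = 1.
Proof. by move=> H; rewrite sgnSTE H; case: ifP. Qed.

Lemma sgnST0l S : sgnST r set0 S = 1.
Proof. by apply: sgnST_inversions0; rewrite /inversions big_set0. Qed.

Lemma sgnST0r S : sgnST r S set0 = 1.
Proof. by apply: sgnST_inversions0; rewrite /inversions big1 // => a _; rewrite big_set0. Qed.

End Signs.

Section Factorization.
Variables (E : finType) (r : nat).

Lemma prodl1 (b : E) : prodl r [:: b] = gen b.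
Proof.
by rewrite /prodl /= basis_lone basis_gen lmul_basis setI0 eqxx sgnST0r setU0.
Qed.

Lemma basis_split (S : {set E}) x : x \in S ->
  basis S = lmul r (lmul r (basis [set y in S | (enum_rank y < enum_rank x)%N]) (gen x))
                   (basis [set y in S | (enum_rank x < enum_rank y)%N]).
Proof.
move=> xS; set L := [set y in S | _]; set R := [set y in S | _].
have rank_inj y : (enum_rank y == enum_rank x :> nat) = (y == x).
  by rewrite (inj_eq val_inj) (inj_eq enum_rank_inj).
have Lx : L :&: [set x] == set0.
  by rewrite setI_eq0 disjoint_sym disjoints1 inE ltnn andbF.
have LxR : (L :|: [set x]) :&: R == set0.
  apply/eqP/setP => y; rewrite !inE -rank_inj.
  by case: (y \in S); rewrite ?andbF //=; case: ltngtP.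
have LR_inv0 : inversions (L :|: [set x]) R = 0%N.
  rewrite /inversions big1 // => a; rewrite !inE -rank_inj => a_le_x.
  apply: big1 => b; rewrite inE => /andP[_ x_lt_b]; apply/eqP; rewrite eqb0 -leqNgt.
  by apply/ltnW/(leq_trans _ x_lt_b); case/orP: a_le_x => [/andP[_ /ltnW]|/eqP->].
have Lx_inv0 : inversions L [set x] = 0%N.
  rewrite /inversions big1 // => a; rewrite inE => /andP[_ a_lt_x].
  by rewrite big_set1 ltnNge ltnW.
rewrite basis_gen lmul_basis Lx sgnST_inversions0 // lmul_basis LxR.
rewrite sgnST_inversions0 //; congr basis; apply/setP => y; rewrite !inE.
case: (eqVneq y x) => [->|nyx]; first by rewrite xS ltnn orbT.
rewrite orbF; case: (y \in S) => //=; case: ltngtP => // /val_inj/enum_rank_inj eq_yx.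
by rewrite eq_yx eqxx in nyx.
Qed.

End Factorization.

Section LinearExtension.
Variables (E F : finType) (r : nat) (B : {set E} -> Lam F).
Implicit Types (x y : Lam E) (S T : {set E}).

Definition linext x : Lam F := \sum_S B S *~ x S.

Lemma linext_is_additive : {morph linext : x y / x - y}.
Proof.
move=> x y; rewrite /linext -sumrB; apply: eq_bigr => S _.
by rewrite !ffunE mulrzBr.
Qed.

HB.instance Definition _ :=
  GRing.isZmodMorphism.Build (Lam E) (Lam F) linext linext_is_additive.

Lemma linext_basis S : linext (basis S) = B S.
Proof.
rewrite /linext (bigD1 S) //= [X in _ + X]big1 => [|S' nS].
  by rewrite ffunE eqxx addr0.
by rewrite ffunE (negbTE nS).
Qed.

Definition basis_multiplicative := forall S T, lmul r (B S) (B T) =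
  if S :&: T == set0 then B (S :|: T) *~ sgnST r S T else 0.

Lemma linext_mul : basis_multiplicative ->
  {morph linext : x y / lmul r x y}.
Proof.
move=> BM x y.
have -> : lmul r (linext x) (linext y) =
    \sum_S \sum_T lmul r (B S *~ x S) (B T *~ y T).
  by rewrite lmul_suml; apply: eq_bigr => S _; rewrite lmul_sumr.
rewrite /linext; under eq_bigr => U _ do rewrite ffunE mulrz_sumr.
under eq_bigr => U _ do under eq_bigr => S _ do rewrite mulrz_sumr.
rewrite exchange_big; apply: eq_bigr => S _; rewrite exchange_big.
apply: eq_bigr => T _; rewrite lmulMzl lmulMzr BM.
case: ifP => _ /=; last by rewrite !mul0rz big1 // => U _; rewrite mulr0z.
rewrite (bigD1 (S :|: T)) //= [X in _ + X]big1 => [|U nU]; last first.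
  by rewrite eq_sym (negbTE nU) mulr0z.
by rewrite eqxx addr0 -!mulrzA; congr (_ *~ _); ring.
Qed.

End LinearExtension.

Lemma basis_multiplicative_comp (E1 E2 E3 : finType) r
    (B1 : {set E2} -> Lam E3) (B : {set E1} -> Lam E2) :
  basis_multiplicative r B1 -> basis_multiplicative r B ->
  basis_multiplicative r (linext B1 \o B).
Proof.
move=> BM1 BM S T /=; rewrite -linext_mul // BM.
by case: ifP => _; rewrite ?raddfMz ?raddf0.
Qed.

Section Ideal.
Variables (V E : finType) (ends : E -> V * V) (r : nat).
Implicit Types (x y : Lam E).

Lemma inI0 : inI ends r 0.
Proof. by exists [::]; rewrite big_nil. Qed.

Lemma inID x y : inI ends r x -> inI ends r y -> inI ends r (x + y).
Proof.
move=> [s1 [h1 ->]] [s2 [h2 ->]]; exists (s1 ++ s2).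
by rewrite all_cat h1 h2 big_cat.
Qed.

Lemma inIMz x k : inI ends r x -> inI ends r (x *~ k).
Proof.
move=> [s [h ->]]; exists [seq (t.1.1 *~ k, t.1.2, t.2) | t <- s].
by rewrite all_map big_map mulrz_suml; split=> //; apply: eq_bigr => t _; rewrite !lmulMzl.
Qed.

Lemma inI_sum (I : Type) (s : seq I) (P : pred I) (F : I -> Lam E) :
  (forall i, P i -> inI ends r (F i)) -> inI ends r (\sum_(i <- s | P i) F i).
Proof.
move=> PF; elim: s => [|a s IH]; first by rewrite big_nil; apply: inI0.
by rewrite big_cons; case: ifP => Pa //; apply: inID (PF a Pa) IH.
Qed.

Lemma inI_arnold a c b : circuit ends c ->
  inI ends r (lmul r (lmul r a (arnold ends r c)) b).
Proof. by move=> cc; exists [:: (a, c, b)]; rewrite /= cc big_seq1. Qed.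

End Ideal.

Definition arnold_compatible (V1 V2 E1 E2 : finType) (en1 : E1 -> V1 * V1)
    (en2 : E2 -> V2 * V2) r (B : {set E1} -> Lam E2) :=
  forall c, circuit en1 c -> exists k c', circuit en2 c' /\
    linext B (arnold en1 r c) = arnold en2 r c' *~ k.

Lemma inI_linext (V1 V2 E1 E2 : finType) (en1 : E1 -> V1 * V1)
    (en2 : E2 -> V2 * V2) r (B : {set E1} -> Lam E2) :
  basis_multiplicative r B ->
  arnold_compatible en1 en2 r B ->
  forall z, inI en1 r z -> inI en2 r (linext B z).
Proof.
move=> BM B_arnold z [s [s_circ ->]]; rewrite raddf_sum /= big_seq.
apply: inI_sum => t ts; have [k [c' [c'_circ Bc]]] := B_arnold _ (allP s_circ t ts).
by rewrite !linext_mul // Bc lmulMzr -lmulMzl; apply: inI_arnold.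
Qed.

Lemma linext_quot_ring_hom (V E1 E2 : finType) (en1 : E1 -> V * V)
    (en2 : E2 -> V * V) r (B : {set E1} -> Lam E2) :
  basis_multiplicative r B -> linext B (lone E1) = lone E2 ->
  arnold_compatible en1 en2 r B ->
  quot_ring_hom en1 en2 r (linext B).
Proof.
move=> BM B_lone B_arnold; split=> [x y /(inI_linext BM B_arnold)|x y|x y|].
- by rewrite raddfB.
- by rewrite raddfD subrr; apply: inI0.
- by rewrite linext_mul // subrr; apply: inI0.
- by rewrite B_lone subrr; apply: inI0.
Qed.

Lemma index_filter (T : eqType) (a : pred T) (s : seq T) x y : a x -> a y ->
  (index x (filter a s) < index y (filter a s))%N = (index x s < index y s)%N.
Proof.
move=> ax ay; elim: s => [|z s IH] //=; case: ifP => az /=.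
  by case: (z == x); case: (z == y) => //=; rewrite ltnS.
have [zx zy] : z != x /\ z != y by split; apply: contraFneq az => ->.
by rewrite (negbTE zx) (negbTE zy) ltnS.
Qed.

Lemma enum_rankE (T : finType) (x : T) : enum_rank x = index x (enum T) :> nat.
Proof.
transitivity (index (nth x (enum T) (enum_rank x)) (enum T)).
  by rewrite index_uniq ?enum_uniq // -cardE ltn_ord.
by rewrite nth_enum_rank.
Qed.

Section Restriction.
Variables (E : finType) (P : pred E) (r : nat).
Local Notation E' := ({x : E | P x} : finType).
Local Notation PS := [set x | P x].
Implicit Types (S T : {set E}) (A B : {set E'}).

(* By construction, a subtype is enumerated in the order of its base type. *)
Lemma val_enum_sig : map val (enum E') = filter P (enum E).
Proof.
rewrite enumT unlock /= (pmap_filter (@insubK _ _ _)) -enumT.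
by apply: eq_filter => x; apply: isSome_insub.
Qed.

Lemma enum_rank_val_lt (b1 b2 : E') :
  (enum_rank b1 < enum_rank b2)%N = (enum_rank (val b1) < enum_rank (val b2))%N.
Proof.
rewrite !enum_rankE -!(index_map val_inj) val_enum_sig index_filter //; exact: valP.
Qed.

Lemma sgnST_val A B : sgnST r (val @: A) (val @: B) = sgnST r A B.
Proof.
have val_inj_in (C : {set E'}) : {in C &, injective val} := in2W val_inj.
rewrite !sgnSTE /inversions big_imset //=; congr (if _ then _ else _ ^+ _).
apply: eq_bigr => a _; rewrite big_imset //=.
by apply: eq_bigr => b _; rewrite enum_rank_val_lt.
Qed.

Lemma imset_val_preimset S : S \subset PS -> val @: (val @^-1: S : {set E'}) = S.
Proof.
move=> SP; apply/setP=> x; apply/imsetP/idP => [[b]|xS].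
  by rewrite inE => bS ->.
have Px : P x by have := subsetP SP x xS; rewrite inE.
by exists (Sub x Px : E'); rewrite ?inE SubK.
Qed.

Lemma preimset_val_eq0 S : S \subset PS -> (val @^-1: S == set0 :> {set E'}) = (S == set0).
Proof.
move=> SP; apply/eqP/eqP => [S0|->]; last exact: preimset0.
by rewrite -(imset_val_preimset SP) S0 imset0.
Qed.

Lemma preimset_val_imset A : val @^-1: (val @: A) = A.
Proof. by apply/setP=> b; rewrite inE mem_imset //; exact: val_inj. Qed.

Definition restr S : Lam E' := if S \subset PS then basis (val @^-1: S : {set E'}) else 0.
Definition incl A : Lam E := basis (val @: A).

Lemma restr_imset A : restr (val @: A) = basis A.
Proof.
rewrite /restr ifT ?preimset_val_imset //.
by apply/subsetP => _ /imsetP[b _ ->]; rewrite inE valP.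
Qed.

Lemma restr_mul : basis_multiplicative r restr.
Proof.
move=> S T; rewrite /restr subUset.
case: (boolP (S \subset PS)) => SP; last by rewrite lmul0l; case: ifP; rewrite ?mul0rz.
case: (boolP (T \subset PS)) => TP; last by rewrite lmul0r; case: ifP; rewrite ?mul0rz.
rewrite lmul_basis -preimsetI -preimsetU -sgnST_val !imset_val_preimset //.
by rewrite preimset_val_eq0 // subIset ?SP.
Qed.

Lemma incl_mul : basis_multiplicative r incl.
Proof.
move=> A B; rewrite /incl lmul_basis -imsetI; last exact: in2W val_inj.
by rewrite imset_eq0 -imsetU sgnST_val.
Qed.

End Restriction.

Lemma setI_eq0F (T : finType) (x : T) (A B : {set T}) :
  x \in A -> x \in B -> (A :&: B == set0) = false.
Proof. by move=> xA xB; apply/negbTE/set0Pn; exists x; rewrite inE xA. Qed.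

Lemma setIU1l (T : finType) (x : T) (A B : {set T}) :
  x \notin B -> (x |: A) :&: B = A :&: B.
Proof.
by move=> xB; apply/setP=> y; rewrite !inE; case: eqP => // ->; rewrite (negbTE xB) !andbF.
Qed.

Lemma setIU1r (T : finType) (x : T) (A B : {set T}) :
  x \notin A -> A :&: (x |: B) = A :&: B.
Proof. by move=> xA; rewrite setIC setIU1l // setIC. Qed.

Section Substitution.
Variables (E : finType) (r : nat) (e e' : E) (sigma : int).
Hypothesis e'_neq_e : e' != e.
Implicit Types (S T A B : {set E}).

(* With [A = S :\ e] we have [e_S = sgnST A [set e] * e_A e_e]; replacing [e_e]
   by [sigma e_e'] gives [sigma * sgnST A [set e] * sgnST A [set e'] * e_(e' |: A)],
   which is 0 when [e'] is already in [A]. *)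
Definition subst_basis S : Lam E :=
  if e \in S then
    if e' \in S then 0
    else basis (e' |: S :\ e) *~ (sigma * sgnST r (S :\ e) [set e] * sgnST r (S :\ e) [set e'])
  else basis S.

Lemma subst_basis_notin S : e \notin S -> subst_basis S = basis S.
Proof. by move=> eS; rewrite /subst_basis (negbTE eS). Qed.

Lemma subst_basis_setU1 A : e \notin A -> subst_basis (e |: A) =
  if e' \in A then 0
  else basis (e' |: A) *~ (sigma * sgnST r A [set e] * sgnST r A [set e']).
Proof.
by move=> eA; rewrite /subst_basis setU11 in_setU1 (negbTE e'_neq_e) setU1K.
Qed.

Lemma subst_basis_mul_inl A T : e \notin A -> e \notin T ->
  lmul r (subst_basis (e |: A)) (subst_basis T) =
  if (e |: A) :&: T == set0 then subst_basis ((e |: A) :|: T) *~ sgnST r (e |: A) T else 0.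
Proof.
move=> eA eT; rewrite subst_basis_setU1 // (subst_basis_notin eT) -setUA.
rewrite subst_basis_setU1; last by rewrite inE negb_or eA eT.
rewrite [e' \in A :|: T]inE.
case e'A: (e' \in A) => /=; first by rewrite lmul0l; case: ifP; rewrite ?mul0rz.
rewrite lmulMzl lmul_basis; case e'T: (e' \in T).
  by rewrite (@setI_eq0F _ e') ?setU11 // mul0rz; case: ifP; rewrite ?mul0rz.
rewrite !setIU1l ?e'T //; case: ifP => AT; rewrite ?mul0rz // -!mulrzA -setUA.
have [eA0 e'A0] : [set e] :&: A == set0 /\ [set e'] :&: A == set0.
  by rewrite !setI_eq0 !disjoints1 eA e'A.
congr (_ *~ _); rewrite !sgnSTUl // (sgnST_set1_transfer r eT (negbT e'T)); ring.
Qed.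

Lemma subst_basis_mul_inr S B : e \notin S -> e \notin B ->
  lmul r (subst_basis S) (subst_basis (e |: B)) =
  if S :&: (e |: B) == set0 then subst_basis (S :|: (e |: B)) *~ sgnST r S (e |: B) else 0.
Proof.
move=> eS eB; rewrite (subst_basis_notin eS) subst_basis_setU1 // setUCA.
rewrite subst_basis_setU1; last by rewrite inE negb_or eS eB.
rewrite [e' \in S :|: B]inE.
case e'B: (e' \in B) => /=; first by rewrite lmul0r orbT; case: ifP; rewrite ?mul0rz.
rewrite lmulMzr lmul_basis; case e'S: (e' \in S) => /=.
  by rewrite (@setI_eq0F _ e') ?setU11 // mul0rz; case: ifP; rewrite ?mul0rz.
rewrite !setIU1r ?e'S //; case: ifP => SB; rewrite ?mul0rz // -!mulrzA setUCA.
have [eB0 e'B0] : [set e] :&: B == set0 /\ [set e'] :&: B == set0.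
  by rewrite !setI_eq0 !disjoints1 eB e'B.
congr (_ *~ _); rewrite !sgnSTUr ?(sgnSTUl r _ SB) //.
by rewrite -[LHS]mulr1 -(sgnST_sq r S [set e]); ring.
Qed.

Lemma subst_basis_mul_in2 A B : e \notin A -> e \notin B ->
  lmul r (subst_basis (e |: A)) (subst_basis (e |: B)) = 0.
Proof.
move=> eA eB; rewrite !subst_basis_setU1 //.
case: (e' \in A); rewrite ?lmul0l //; case: (e' \in B); rewrite ?lmul0r //.
by rewrite lmulMzl lmulMzr lmul_basis (@setI_eq0F _ e') ?setU11 // !mul0rz.
Qed.

Lemma subst_basis_mul : basis_multiplicative r subst_basis.
Proof.
move=> S T; case: (boolP (e \in S)) => eS; case: (boolP (e \in T)) => eT.
- rewrite -(setD1K eS) -(setD1K eT) subst_basis_mul_in2 ?setD11 //.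
  by rewrite (@setI_eq0F _ e) ?setU11.
- by rewrite -(setD1K eS) subst_basis_mul_inl ?setD11.
- by rewrite -(setD1K eT) subst_basis_mul_inr ?setD11.
rewrite (subst_basis_notin eS) (subst_basis_notin eT) lmul_basis; case: ifP => // _.
by rewrite subst_basis_notin // inE negb_or eS eT.
Qed.

End Substitution.

Section Orientation.
Variable V : eqType.
Implicit Types p q s : V * V.

Definition same_ends p q : bool := (p == q) || (p == (q.2, q.1)).
Definition orient p q : int := if p == q then 1 else -1.

Lemma same_ends_trans p q s : same_ends p q -> same_ends q s -> same_ends p s.
Proof.
case: p q s => [a b] [c d] [x y]; rewrite /same_ends /= !xpair_eqE.
by case/orP => /andP[/eqP-> /eqP->]; case/orP => /andP[/eqP-> /eqP->]; rewrite !eqxx ?orbT.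
Qed.

Lemma orient_switch p q s : q.1 != q.2 -> same_ends p q -> same_ends q s ->
  orient q s = orient p q * orient p s.
Proof.
case: p q s => [a b] [c d] [x y] /= cd; have dc : d != c by rewrite eq_sym.
rewrite /same_ends /orient /= !xpair_eqE.
case/orP => /andP[/eqP-> /eqP->]; case/orP => /andP[/eqP<- /eqP<-];
  by rewrite ?eqxx ?(negbTE cd) ?(negbTE dc).
Qed.

Lemma orient_swap p q : q.1 != q.2 -> same_ends p q -> orient p (q.2, q.1) = - orient p q.
Proof.
case: p q => [a b] [c d] /= cd; have dc : d != c by rewrite eq_sym.
rewrite /same_ends /orient /= !xpair_eqE.
by case/orP => /andP[/eqP-> /eqP->]; rewrite ?eqxx ?(negbTE cd) ?(negbTE dc).
Qed.

End Orientation.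

Definition arnold_coef (V E : finType) (ends : E -> V * V) r c i : int :=
  if odd r then eps ends c i else (-1) ^+ i.+1.

Lemma arnoldE (V E : finType) (ends : E -> V * V) r c : arnold ends r c =
  \sum_(i < size c) prodl r (map fst (take i c ++ drop i.+1 c)) *~ arnold_coef ends r c i.
Proof. by apply: eq_bigr => i _; apply/ffunP => S; rewrite ffunMzE !ffunE mulrzz mulrC. Qed.

Lemma count_take_drop_nth (T : Type) (a : pred T) s i x0 : (i < size s)%N ->
  count a s = (count a (take i s ++ drop i.+1 s) + a (nth x0 s i))%N.
Proof.
move=> lt_i_s; rewrite -{1}(cat_take_drop i s) (drop_nth x0 lt_i_s) !count_cat /=.
by rewrite addnA addnAC.
Qed.

Section ParallelEdge.
Variables (V E : finType) (ends : E -> V * V) (r : nat) (e e' : E).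
Hypotheses (e'_neq_e : e' != e) (e'_par : same_ends (ends e') (ends e)).
Hypothesis e_nonloop : (ends e).1 != (ends e).2.
Local Notation E' := ({b : E | b != e} : finType).
Local Notation ends' := (del_ends ends e).
Implicit Types (x : Lam E) (y : Lam E').

Definition sigma : int := if odd r then orient (ends e') (ends e) else 1.

Definition collapse_basis (S : {set E}) : Lam E' :=
  linext (restr (fun b => b != e)) (subst_basis r e e' sigma S).

Local Notation collapse := (linext collapse_basis).
Local Notation embed := (linext (@incl E (fun b => b != e))).

Lemma collapse_basis_mul : basis_multiplicative r collapse_basis.
Proof. exact: basis_multiplicative_comp (restr_mul _ _) (subst_basis_mul _ _ e'_neq_e). Qed.

Lemma collapse_mul : {morph collapse : x1 x2 / lmul r x1 x2}.
Proof. exact: linext_mul collapse_basis_mul. Qed.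

Lemma embed_mul : {morph embed : y1 y2 / lmul r y1 y2}.
Proof. exact/linext_mul/incl_mul. Qed.

Definition redirect (b : E) : E' := insubd (Sub e' e'_neq_e) b.

Lemma val_redirect b : val (redirect b) = if b == e then e' else b.
Proof.
rewrite /redirect; case: eqVneq => [->|b_neq_e]; last by rewrite insubdK.
by rewrite /insubd insubF ?eqxx.
Qed.

Lemma collapse_gen b : collapse (gen b) = gen (redirect b) *~ (if b == e then sigma else 1).
Proof.
have restr_gen c : linext (restr (fun b => b != e)) (gen (val c)) = gen c.
  by rewrite basis_gen linext_basis -imset_set1 restr_imset.
rewrite basis_gen linext_basis /collapse_basis -restr_gen val_redirect.
case: (eqVneq b e) => [->|b_neq_e] /=; last first.
  by rewrite subst_basis_notin ?inE 1?eq_sym.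
rewrite -[[set e]]setU0 subst_basis_setU1 ?inE // !sgnST0l !mulr1 setU0.
by rewrite raddfMz.
Qed.

Lemma collapse_lone : collapse (lone E) = lone E'.
Proof.
rewrite basis_lone linext_basis /collapse_basis subst_basis_notin ?inE //.
by rewrite linext_basis -(imset0 (val : E' -> E)) restr_imset.
Qed.

Lemma collapse_prodl l :
  collapse (prodl r l) = prodl r (map redirect l) *~ (sigma ^+ count_mem e l).
Proof.
elim: l => [|b l IH]; first exact: collapse_lone.
rewrite /= !prodl_cons collapse_mul collapse_gen IH lmulMzl lmulMzr -mulrzA.
by congr (_ *~ _); case: (b == e); rewrite ?exprS ?add0n ?mulr1 1?mulrC.
Qed.

Lemma embed_lone : embed (lone E') = lone E.
Proof. by rewrite basis_lone linext_basis /incl imset0. Qed.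

Lemma embed_prodl (l : seq E') : embed (prodl r l) = prodl r (map val l).
Proof.
elim: l => [|b l IH]; first exact: embed_lone.
by rewrite /= !prodl_cons embed_mul IH basis_gen linext_basis /incl imset_set1.
Qed.

Definition redirect_step (t : E * (V * V)) : E' * (V * V) := (redirect t.1, t.2).
Definition val_step (t : E' * (V * V)) : E * (V * V) := (val t.1, t.2).

Lemma circuit_redirect c : circuit ends c -> circuit ends' (map redirect_step c).
Proof.
case/and3P => c_gt0 c_closed c_ends; apply/and3P; split; rewrite ?size_map -?map_comp //.
apply/allP => _ /mapP[t tc ->]; change (same_ends (ends (val (redirect t.1))) t.2).
have t_ends : same_ends (ends t.1) t.2 := allP c_ends t tc.
by rewrite val_redirect; case: (eqVneq t.1 e) t_ends => [->|_] //; apply: same_ends_trans.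
Qed.

Lemma circuit_val c : circuit ends' c -> circuit ends (map val_step c).
Proof. by case/and3P => *; apply/and3P; rewrite size_map -!map_comp all_map. Qed.

Lemma embed_arnold c : embed (arnold ends' r c) = arnold ends r (map val_step c).
Proof.
rewrite !arnoldE size_map raddf_sum /=; apply: eq_bigr => i _.
rewrite raddfMz /= embed_prodl /arnold_coef /eps onth_map -map_take -map_drop.
by rewrite -map_cat -!map_comp; case: (onth c i).
Qed.

Lemma arnold_coef_redirect c i : circuit ends c -> (i < size c)%N ->
  arnold_coef ends r c i =
  arnold_coef ends' r (map redirect_step c) i * sigma ^+ (nth e (map fst c) i == e).
Proof.
case/and3P => _ _ c_ends lt_i_c; rewrite /arnold_coef /sigma.
case: (odd r); last by rewrite expr1n mulr1.
set t := nth (e, ends e) c i.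
have c_i : onth c i = Some t by rewrite onthE (nth_map (e, ends e)).
have t_ends : same_ends (ends t.1) t.2 by apply: (allP c_ends); rewrite mem_nth.
rewrite /eps onth_map c_i (nth_map (e, ends e)) //=.
rewrite -/(orient (ends t.1) t.2) -/(orient (ends (val (redirect t.1))) t.2) val_redirect.
case: (eqVneq t.1 e) t_ends => [-> e_ends|_ _]; last by rewrite mulr1.
by rewrite (orient_switch e_nonloop e'_par e_ends) mulrC.
Qed.

Lemma collapse_arnold c : circuit ends c ->
  collapse (arnold ends r c) =
  arnold ends' r (map redirect_step c) *~ (sigma ^+ count_mem e (map fst c)).
Proof.
move=> c_circ; rewrite !arnoldE size_map raddf_sum /= mulrz_suml.
apply: eq_bigr => i _; rewrite raddfMz /= collapse_prodl -!mulrzA.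
rewrite -map_take -map_drop -map_cat -!map_comp (arnold_coef_redirect c_circ) //.
have lt_i_c : (i < size (map fst c))%N by rewrite size_map.
by rewrite (count_take_drop_nth _ e lt_i_c) exprD !map_cat !map_take !map_drop mulrCA.
Qed.

Definition parallel_circuit : seq (E * (V * V)) :=
  [:: (e, ends e); (e', ((ends e).2, (ends e).1))].

Lemma circuit_parallel : circuit ends parallel_circuit.
Proof.
move: e'_par; rewrite /circuit /same_ends /= !eqxx orbC.
by rewrite -surjective_pairing andbT.
Qed.

Lemma parallel_arnold : gen e' *~ sigma - gen e =
  arnold ends r parallel_circuit *~ (if odd r then sigma else -1).
Proof.
rewrite arnoldE !big_ord_recl big_ord0 /= !prodl1 /arnold_coef /eps /= eqxx.
rewrite -[if ends e' == _ then _ else _]/(orient _ _) (orient_swap e_nonloop e'_par) /sigma.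
case: (odd r); last by apply/ffunP => S; rewrite !(ffunE, ffunMzE); ring.
by rewrite /orient; case: ifP => _; apply/ffunP => S; rewrite !(ffunE, ffunMzE) ?mulrzz; ring.
Qed.

Lemma collapse_incl (A : {set E'}) : collapse (incl A) = basis A.
Proof.
have eA : e \notin val @: A by apply/imsetP => -[b _ e_b]; move: (valP b); rewrite -e_b eqxx.
by rewrite linext_basis /collapse_basis subst_basis_notin // linext_basis restr_imset.
Qed.

Lemma collapse_embed y : collapse (embed y) = y.
Proof.
rewrite [RHS]Lam_expand (_ : embed y = \sum_A incl A *~ y A) // raddf_sum /=.
by apply: eq_bigr => A _; rewrite raddfMz /= collapse_incl.
Qed.

Lemma embed_collapse_notin (S : {set E}) : e \notin S -> embed (collapse (basis S)) = basis S.
Proof.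
move=> eS; have S_sub : S \subset [set b | b != e].
  by apply/subsetP => b bS; rewrite inE; apply: contraNneq eS => <-.
rewrite -(imset_val_preimset S_sub) linext_basis /collapse_basis subst_basis_notin.
  by rewrite linext_basis restr_imset linext_basis.
by rewrite imset_val_preimset.
Qed.

Lemma embed_collapse_sub x : inI ends r (embed (collapse x) - x).
Proof.
rewrite {2}[x]Lam_expand (_ : collapse x = \sum_S collapse_basis S *~ x S) //.
rewrite raddf_sum /= -sumrB; apply: inI_sum => S _; rewrite raddfMz /= -mulrzBl.
apply: inIMz; rewrite -(linext_basis collapse_basis).
case: (boolP (e \in S)) => eS; last by rewrite embed_collapse_notin // subrr; apply: inI0.
rewrite (basis_split r eS) !collapse_mul collapse_gen eqxx !embed_mul raddfMz /=.
have embed_gen : embed (gen (redirect e)) = gen e'.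
  by rewrite basis_gen linext_basis /incl imset_set1 val_redirect eqxx.
rewrite !embed_collapse_notin ?inE ?ltnn ?andbF // embed_gen -lmulBl -lmulBr.
by rewrite parallel_arnold lmulMzr -lmulMzl; apply/inI_arnold/circuit_parallel.
Qed.

Lemma parallel_R_iso : R_iso ends ends' r.
Proof.
exists collapse, embed; split.
- apply: (linext_quot_ring_hom collapse_basis_mul collapse_lone) => c c_circ.
  by exists (sigma ^+ count_mem e (map fst c)), (map redirect_step c);
    rewrite circuit_redirect // collapse_arnold.
- apply: (linext_quot_ring_hom (incl_mul _) embed_lone) => c c_circ.
  by exists 1, (map val_step c); rewrite circuit_val // embed_arnold.
- exact: embed_collapse_sub.
- by move=> y; rewrite collapse_embed subrr; apply: inI0.
Qed.

End ParallelEdge.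

Theorem mainTheorem4 (r : nat) (V E : finType) (ends : E -> V * V) (e : E) :
  (1 <= r)%N ->
  (forall b : E, (ends b).1 != (ends b).2) ->
  (exists2 e' : E, e' != e &
     (ends e' == ends e) || (ends e' == ((ends e).2, (ends e).1))) ->
  R_iso ends (del_ends ends e) r.
Proof.
move=> _ no_loops [e' e'_neq_e e'_par].
exact: parallel_R_iso e'_neq_e e'_par (no_loops e).
Qed.
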